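(* Let $\Sigma$ be a graded alphabet and $L$ a finite tree language over $\Sigma$. Then the RWTA $A_L$ is a sequential RWTA that realizes $\mathrm{SubTreeSeries}_L$, i.e. $\mathbb{P}_{A_L}=\mathrm{SubTreeSeries}_L$.
   Context: A graded alphabet is a finite set $\Sigma=\bigcup_{k\in\mathbb{N}}\Sigma_k$; $T_\Sigma$ is the set of trees $f(t_1,\ldots,t_k)$ with $f\in\Sigma_k$. A RWTA (weights in $(\mathbb{N},+)$) is $A=(\Sigma,Q,\nu,\delta)$ with $Q$ finite, $\nu:Q\to\mathbb{N}$, $\delta\subseteq\bigcup_k Q\times\Sigma_k\times Q^k$; $\delta(f,q_1,\ldots,q_k)=\{q\mid(q,f,q_1,\ldots,q_k)\in\delta\}$, extended to subsets by union over tuples; $\nu(S)=\sum_{s\in S}\nu(s)$ ($\nu(\emptyset)=0$); $\Delta(f(t_1,\ldots,t_k))=\delta(f,\Delta(t_1),\ldots,\Delta(t_k))$; $\mathbb{P}_A(t)=\nu(\Delta(t))$; $A$ is sequential if $\mathrm{Card}(\Delta(t))\le1$ for all $t$. For $t=f(t_1,\ldots,t_k)$, $\mathrm{SubTree}(t)=\{t\}\cup\bigcup_j\mathrm{SubTree}(t_j)$; $\mathrm{SubTreeSet}(L)=\bigcup_{t\in L}\mathrm{SubTree}(t)$; $\mathrm{SubTreeSeries}_t(s)$ is the number of nodes of $t$ whose subtree equals $s$, and $\mathrm{SubTreeSeries}_L=\sum_{t\in L}\mathrm{SubTreeSeries}_t$. The sequential subtree automaton of $L$ is $A_L=(\Sigma,\mathrm{SubTreeSet}(L),\nu,\delta)$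 with $\nu(t')=\mathrm{SubTreeSeries}_L(t')$ and, for $f\in\Sigma_k$, $t_{k+1}\in\delta(f,t_1,\ldots,t_k)$ iff $t_{k+1}=f(t_1,\ldots,t_k)$. *)

From HB Require Import structures.
From Stdlib Require List.
From mathcomp Require Import all_boot.
Set Implicit Arguments. Unset Strict Implicit. Unset Printing Implicit Defensive.

(* A graded alphabet is a finite type [Sigma] together with an arity
   function [ar : Sigma -> nat]; Sigma_k = [set f | ar f == k]. *)

Inductive tree (Sigma : Type) := Node of Sigma & seq (tree Sigma).
Arguments Node {Sigma} _ _.

Section TreeInd.
Variables (Sigma : Type) (P : tree Sigma -> Prop).
Hypothesis HN : forall f ts, List.Forall P ts -> P (Node f ts).
Fixpoint tree_ind' (t : tree Sigma) : P t :=
  match t with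
  | Node f ts => HN f
      ((fix aux (l : seq (tree Sigma)) : List.Forall P l :=
          match l with
          | [::] => List.Forall_nil P
          | t' :: l' => List.Forall_cons t' (tree_ind' t') (aux l')
          end) ts)
  end.
End TreeInd.

Section TreeCount.
Variable Sigma : countType.
Fixpoint tree_enc (t : tree Sigma) : GenTree.tree Sigma :=
  match t with Node f ts => GenTree.Node 0 (GenTree.Leaf f :: map tree_enc ts) end.
Fixpoint tree_dec (g : GenTree.tree Sigma) : option (tree Sigma) :=
  match g with
  | GenTree.Node _ (GenTree.Leaf f :: gs) => Some (Node f (pmap tree_dec gs))
  | _ => None
  end.
Lemma tree_encK : pcancel tree_enc tree_dec.
Proof.
elim/tree_ind' => f ts IH /=; congr (Some (Node f _)).
elim: IH => //= t l -> _ ->; by [].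
Qed.
HB.instance Definition _ := Countable.copy (tree Sigma) (pcan_type tree_encK).
End TreeCount.

Section Defs.
Variables (Sigma : finType) (ar : Sigma -> nat).

(* t \in T_Sigma : every node labelled f has exactly ar f children *)
Fixpoint wf_tree (t : tree Sigma) : bool :=
  match t with Node f ts => (size ts == ar f) && all wf_tree ts end.

(* list of the subtrees rooted at each node of t (with multiplicity,
   one entry per node); SubTree(t) is its underlying set *)
Fixpoint subtree_nodes (t : tree Sigma) : seq (tree Sigma) :=
  match t with Node f ts => t :: flatten (map subtree_nodes ts) end.

Definition SubTree (t : tree Sigma) : seq (tree Sigma) := undup (subtree_nodes t).

(* a finite tree language is given by a duplicate-free list L *)
Definition SubTreeSet (L : seq (tree Sigma)) : seq (tree Sigma) :=
  undup (flatten (map SubTree L)).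

Definition SubTreeSeries_t (t s : tree Sigma) : nat :=
  count_mem s (subtree_nodes t).

Definition SubTreeSeries (L : seq (tree Sigma)) (s : tree Sigma) : nat :=
  \sum_(t <- L) SubTreeSeries_t t s.

Record rwta (Q : finType) := RWTA {
  nu : Q -> nat;
  (* delta f qs q  <->  (q, f, q_1, ..., q_k) \in delta, where qs = [:: q_1; ...; q_k] *)
  delta : Sigma -> seq Q -> Q -> bool;
  delta_arity : forall f qs q, delta f qs q -> size qs = ar f
}.

Fixpoint tuples (Q : Type) (ss : seq (seq Q)) : seq (seq Q) :=
  match ss with
  | [::] => [:: [::]]
  | s :: ss' => [seq q :: qs | q <- s, qs <- tuples ss']
  end.

Section RWTA.
Variables (Q : finType) (A : rwta Q).

Definition delta_set (f : Sigma) (Ss : seq {set Q}) : {set Q} :=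
  \bigcup_(qs <- tuples (map (fun S : {set Q} => enum S) Ss))
     [set q | delta A f qs q].

Fixpoint Delta (t : tree Sigma) : {set Q} :=
  match t with Node f ts => delta_set f (map Delta ts) end.

Definition nu_set (S : {set Q}) : nat := \sum_(s in S) nu A s.

Definition behaviour (t : tree Sigma) : nat := nu_set (Delta t).

Definition sequential : Prop := forall t, wf_tree t -> #|Delta t| <= 1.

Definition realizes (F : tree Sigma -> nat) : Prop :=
  forall t, wf_tree t -> behaviour t = F t.
End RWTA.

Section SubtreeAutomaton.
Variable L : seq (tree Sigma).

Definition ST_state := seq_sub (SubTreeSet L).

Definition AL_delta (f : Sigma) (qs : seq ST_state) (q : ST_state) : bool :=
  (size qs == ar f) && (val q == Node f (map val qs)).

Lemma AL_delta_arity f qs q : AL_delta f qs q -> size qs = ar f.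
Proof. by case/andP => /eqP. Qed.

Definition A_L : rwta ST_state :=
  @RWTA ST_state (fun q => SubTreeSeries L (val q)) AL_delta AL_delta_arity.
End SubtreeAutomaton.
End Defs.

From HB Require Import structures.
From mathcomp Require Import all_boot.
Set Implicit Arguments. Unset Strict Implicit.

(* By induction on t, Delta t is the set of states whose underlying tree is t
   itself: the unique transition into Node f ts reads exactly the states of the
   subtrees ts, all of which are states since SubTreeSet L is subtree-closed.
   Hence Delta t has at most one element, and its weight is SubTreeSeries L t,
   which vanishes precisely when t is not a state. *)

Lemma Forall_mem (T : eqType) (P : T -> Prop) (s : seq T) :
  List.Forall P s -> forall x, x \in s -> P x.
Proof.
elim=> //= a l Pa _ IH x; rewrite inE => /orP[/eqP -> //|]; exact: IH.
Qed.
Arguments Forall_mem {T P s} _ {x}.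

Lemma bigcup_seqP (T : finType) (I : eqType) (r : seq I) (F : I -> {set T}) x :
  reflect (exists2 i, i \in r & x \in F i) (x \in \bigcup_(i <- r) F i).
Proof.
elim: r => [|i r IH]; first by rewrite big_nil inE; constructor; case.
rewrite big_cons inE; apply: (iffP orP).
- case=> [H|/IH [j Hj Hx]]; first by exists i; rewrite ?inE ?eqxx.
  by exists j; rewrite // inE Hj orbT.
- case=> j; rewrite inE => /orP[/eqP -> H|Hj Hx]; first by left.
  by right; apply/IH; exists j.
Qed.

Lemma mem_tuples (Q : eqType) (ss : seq (seq Q)) (qs : seq Q) :
  (qs \in tuples ss) = (size qs == size ss) && all2 (fun q s => q \in s) qs ss.
Proof.
elim: ss qs => [|s ss IH] [|q qs] //=.
- by apply/negbTE/allpairsP => [[p [_ _]]].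
- apply/allpairsP/idP.
  + case=> [[a b]] /= [Ha Hb [-> ->]]; move: Hb; rewrite IH => /andP[/eqP -> ->].
    by rewrite eqxx Ha.
  + case/andP=> Hs /andP[Hq Hall]; exists (q, qs); split => //.
    by rewrite IH Hall andbT -eqSS.
Qed.

Section SeqSubFibers.
Variables (T : choiceType) (s : seq T).

Lemma mem_tuples_fibers (xs : seq T) (qs : seq (seq_sub s)) :
  (qs \in tuples [seq enum [set q : seq_sub s | val q == x] | x <- xs])
    = (map val qs == xs).
Proof.
rewrite mem_tuples size_map.
elim: xs qs => [|x xs IH] [|q qs] //=.
by rewrite eqSS mem_enum inE andbCA IH eqseq_cons.
Qed.

Lemma lift_seq_sub (xs : seq T) :
  {subset xs <= s} -> exists qs : seq (seq_sub s), map val qs = xs.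
Proof.
elim: xs => [|x xs IH] sub_xs; first by exists [::].
have [qs <-] := IH (fun y Hy => sub_xs y (mem_behead (s := x :: xs) Hy)).
by exists (SeqSub (sub_xs x (mem_head x xs)) :: qs).
Qed.

Lemma seq_sub_fiber_in x (Hx : x \in s) :
  [set q : seq_sub s | val q == x] = [set SeqSub Hx].
Proof. by apply/setP => q; rewrite !inE -val_eqE. Qed.

Lemma seq_sub_fiber_notin x :
  x \notin s -> [set q : seq_sub s | val q == x] = set0.
Proof.
move=> Hx; apply/setP => q; rewrite !inE.
by apply/negbTE; apply: contra Hx => /eqP <-; apply: ssvalP.
Qed.

End SeqSubFibers.

Section SubtreeAutomaton.
Variables (Sigma : finType) (ar : Sigma -> nat) (L : seq (tree Sigma)).

Lemma subtree_nodes_self (u : tree Sigma) : u \in subtree_nodes u.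
Proof. by case: u => f ts /=; rewrite inE eqxx. Qed.

Lemma subtree_nodes_trans (u s x : tree Sigma) :
  s \in subtree_nodes u -> x \in subtree_nodes s -> x \in subtree_nodes u.
Proof.
elim/tree_ind': u => f ts IH /=; rewrite inE => /orP[/eqP -> //|].
move=> /flatten_mapP [v Hv Hs] Hx; rewrite inE; apply/orP; right.
by apply/flatten_mapP; exists v => //; exact: (Forall_mem IH Hv Hs Hx).
Qed.

Lemma mem_SubTreeSet (x : tree Sigma) :
  reflect (exists2 u, u \in L & x \in subtree_nodes u) (x \in SubTreeSet L).
Proof.
rewrite /SubTreeSet mem_undup; apply: (iffP flatten_mapP).
- by case=> u Hu; rewrite mem_undup; exists u.
- by case=> u Hu Hx; exists u; rewrite ?mem_undup.
Qed.

Lemma SubTreeSet_child f ts :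
  Node f ts \in SubTreeSet L -> {subset ts <= SubTreeSet L}.
Proof.
move=> /mem_SubTreeSet [u Hu Hn] x Hx; apply/mem_SubTreeSet; exists u => //.
apply: (subtree_nodes_trans Hn); rewrite /= inE; apply/orP; right.
by apply/flatten_mapP; exists x => //; apply: subtree_nodes_self.
Qed.

Lemma SubTreeSeries_notin (t : tree Sigma) :
  t \notin SubTreeSet L -> SubTreeSeries L t = 0.
Proof.
move=> Ht; rewrite /SubTreeSeries big_seq big1 // => u Hu.
apply/count_memPn; apply: contra Ht => Htu.
by apply/mem_SubTreeSet; exists u.
Qed.

Lemma delta_set_fibers f (ts : seq (tree Sigma)) :
  size ts = ar f ->
  delta_set (A_L ar L) f [seq [set q | val q == x] | x <- ts]
    = [set q | val q == Node f ts].
Proof.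
move=> Hsz; apply/setP => q; rewrite inE /delta_set -map_comp.
apply/bigcup_seqP/idP.
- case=> qs; rewrite mem_tuples_fibers => /eqP Hqs.
  by rewrite inE /= /AL_delta Hqs => /andP[_].
- move=> /eqP Hq.
  have Hin : Node f ts \in SubTreeSet L by rewrite -Hq; apply: ssvalP.
  have [qs Hqs] := lift_seq_sub (SubTreeSet_child Hin).
  exists qs; first by rewrite mem_tuples_fibers Hqs.
  by rewrite inE /= /AL_delta Hq -Hsz -Hqs size_map !eqxx.
Qed.

Lemma Delta_A_L (t : tree Sigma) :
  wf_tree ar t -> Delta (A_L ar L) t = [set q | val q == t].
Proof.
elim/tree_ind': t => f ts IH /= /andP[/eqP Hsz Hwf].
rewrite -(delta_set_fibers Hsz); congr delta_set; apply/eq_in_map => x Hx.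
exact: (Forall_mem IH Hx (allP Hwf x Hx)).
Qed.

End SubtreeAutomaton.

Theorem corollary7 (Sigma : finType) (ar : Sigma -> nat) (L : seq (tree Sigma)) :
  uniq L -> all (wf_tree ar) L ->
  sequential (A_L ar L) /\ realizes (A_L ar L) (SubTreeSeries L).
Proof.
move=> _ _; split=> t wf_t.
- rewrite Delta_A_L //; have [Ht|Ht] := boolP (t \in SubTreeSet L).
  + by rewrite (seq_sub_fiber_in Ht) cards1.
  + by rewrite seq_sub_fiber_notin ?cards0.
- rewrite /behaviour /nu_set Delta_A_L //.
  have [Ht|Ht] := boolP (t \in SubTreeSet L).
  + by rewrite (seq_sub_fiber_in Ht) big_set1.
  + by rewrite seq_sub_fiber_notin // big_set0 SubTreeSeries_notin.
Qed.
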